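(* Let $\cdot:H\otimes B\to B$ be a symmetric partial action of $H$ on a unital algebra $B$, and let $\overline B$ be its globalization (the standard dilation of $B$). Then the standard dilation of the partial $H$-module $\underline{B\# H}$ is isomorphic, as a left $H$-module, to a direct summand of the smash product $\overline B\# H$. Here $\overline B\# H$ is regarded as a left $H$-module via $h\triangleright(f\# k)=(h_{(1)}\triangleright f)\# h_{(2)}k$.
   Context: Throughout, $k$ is a field and $H$ is a Hopf algebra over $k$ with bijective antipode $S$ and Sweedler notation $\Delta(h)=h_{(1)}\otimes h_{(2)}$. A symmetric partial action of $H$ on a unital algebra $B$ is a linear map $h\otimes b\mapsto h\cdot b$ such that for all $h,k\in H$, $a,b\in B$: - $1_H\cdot a=a$; - $h\cdot(ab)=(h_{(1)}\cdot a)(h_{(2)}\cdot b)$; - $h\cdot(k\cdot a)=(h_{(1)}\cdot1_B)(h_{(2)}k\cdot a)$; - $h\cdot(k\cdot a)=(h_{(1)}k\cdot a)(h_{(2)}\cdot1_B)$. A partial $H$-module is a vector space $M$ with linear $\pi:H\to\mathrm{End}_k(M)$ satisfying, for all $h,k$: - $\pi(1_H)=\mathrm{id}$; - $\pi(h)\pi(k_{(1)})\pi(S(k_{(2)}))=\pi(hk_{(1)})\pi(S(k_{(2)}))$; - $\pi(h_{(1)})\pi(S(h_{(2)}))\pi(k)=\pi(h_{(1)})\pi(S(h_{(2)})k)$; - $\pi(h)\pi(S(k_{(1)}))\pi(k_{(2)})=\pi(hS(k_{(1)}))\pi(k_{(2)})$; - $\pi(S(h_{(1)}))\pi(h_{(2)})\pi(k)=\pi(S(h_{(1)}))\pi(h_{(2)}k)$.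 Standard dilation of $(M,\pi)$: $\operatorname{Hom}_k(H,M)$ is a left $H$-module via $(h\triangleright f)(k)=f(kh)$, $\varphi(m)(h)=\pi(h)(m)$, and $\overline M=H\triangleright\varphi(M)$ is the $H$-submodule generated by $\varphi(M)$. For $M=B$ with $\pi(h)(b)=h\cdot b$, this gives $\overline B$, an $H$-module algebra under convolution $(f*g)(k)=f(k_{(1)})g(k_{(2)})$. $B\otimes H$ is a partial $H$-module via $h\cdot(b\otimes k)=(h_{(1)}\cdot b)\otimes h_{(2)}k$. The partial smash product $\underline{B\# H}$ is the subspace of $B\otimes H$ spanned by $b\# h:=b(h_{(1)}\cdot1_B)\otimes h_{(2)}$. It is a partial $H$-submodule (in fact a direct summand) of $B\otimes H$. $\overline B\# H$ denotes $\overline B\otimes H$ with product $(f\# h)(g\# k)=f*(h_{(1)}\triangleright g)\# h_{(2)}k$. *)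

From HB Require Import structures.
From mathcomp Require Import all_boot all_algebra.
Set Implicit Arguments.
Unset Strict Implicit.
Unset Printing Implicit Defensive.
Import GRing.Theory.
Local Open Scope ring_scope.

Section Multilinear.
Variable k : fieldType.

Definition klinear (U V : lmodType k) (f : U -> V) : Prop :=
  forall (a : k) (x y : U), f (a *: x + y) = a *: f x + f y.

Definition kbilinear (U V W : lmodType k) (f : U -> V -> W) : Prop :=
  (forall y, klinear (fun x => f x y)) /\ (forall x, klinear (f x)).

Definition ktrilinear (U V W X : lmodType k) (f : U -> V -> W -> X) : Prop :=
  (forall y z, klinear (fun x => f x y z)) /\
  (forall x z, klinear (fun y => f x y z)) /\
  (forall x y, klinear (f x y)).
End Multilinear.

Fixpoint allProp (T : Type) (P : T -> Prop) (s : seq T) : Prop :=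
  if s is x :: s' then P x /\ allProp P s' else True.

(* The comultiplication is given by a function  cop : H -> seq (H*H)   *)
(* choosing, for each h, a finite representation                       *)
(*      Delta(h) = sum_{(a,b) in cop h} a (x) b   in H (x) H.          *)
(* An element of H (x) H is determined by its pairings with all        *)
(* bilinear maps (universal property), so every axiom is stated via    *)
(* the Sweedler sums  sw cop h beta = sum beta(h_(1), h_(2)).          *)
Section Hopf.
Variables (k : fieldType) (H : algType k).

Definition sw (cop : H -> seq (H * H)) (V : zmodType) (h : H)
  (beta : H -> H -> V) : V := \sum_(p <- cop h) beta p.1 p.2.

Record is_hopf (cop : H -> seq (H * H)) (cou : H -> k) (S : H -> H) : Prop := {
  cop_linear : forall (U : lmodType k) (beta : H -> H -> U),
     kbilinear beta -> klinear (fun h => sw cop h beta);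
  cop_coassoc : forall (U : lmodType k) (g : H -> H -> H -> U), ktrilinear g ->
     forall h, sw cop h (fun a b => sw cop a (fun c d => g c d b))
             = sw cop h (fun a b => sw cop b (fun c d => g a c d));
  cou_linear : klinear (cou : H -> k^o);
  cou_left  : forall h, sw cop h (fun a b => cou a *: b) = h;
  cou_right : forall h, sw cop h (fun a b => cou b *: a) = h;
  cop_mul : forall (U : lmodType k) (beta : H -> H -> U), kbilinear beta ->
     forall g h, sw cop (g * h) beta
               = sw cop g (fun a b => sw cop h (fun c d => beta (a * c) (b * d)));
  cop_one : forall (U : lmodType k) (beta : H -> H -> U), kbilinear beta ->
     sw cop 1 beta = beta 1 1;
  cou_mul : forall g h, cou (g * h) = cou g * cou h;
  cou_one : cou 1 = 1;
  antip_linear : klinear S;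
  antip_left  : forall h, sw cop h (fun a b => S a * b) = cou h *: 1;
  antip_right : forall h, sw cop h (fun a b => a * S b) = cou h *: 1;
  antip_bij : bijective S
}.

Definition lmf (l : {linear H -> k^o}) (c : H) : H -> k^o := fun x => l (c * x).
Lemma lmf_lin l c : linear (lmf l c).
Proof. by move=> a x y; rewrite /lmf mulrDr -scalerAr linearP. Qed.
HB.instance Definition _ l c :=
  GRing.isLinear.Build k H k^o *:%R (lmf l c) (lmf_lin l c).
End Hopf.

Section PartialAction.
Variables (k : fieldType) (H B : algType k) (cop : H -> seq (H * H)).

Record sym_partial_action (pa : H -> B -> B) : Prop := {
  pa_bilinear : kbilinear pa;
  pa_one : forall a, pa 1 a = a;
  pa_mul : forall h a b, pa h (a * b) = sw cop h (fun x y => pa x a * pa y b);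
  pa_compl : forall h g a,
     pa h (pa g a) = sw cop h (fun x y => pa x 1 * pa (y * g) a);
  pa_compr : forall h g a,
     pa h (pa g a) = sw cop h (fun x y => pa (x * g) a * pa y 1)
}.

(* Tensor products  V (x) H.  For vector spaces over a field, the map  *)
(*   V (x) H -> Hom(H^*, V),   v (x) x |-> (l |-> l(x) v)              *)
(* is injective; we identify V (x) H with its image, i.e. with the      *)
(* span of the "pure tensors" below inside  {linear H -> k} -> V.      *)
Definition dualH := {linear H -> k^o}.

(* ambient type for B (x) H *)
Definition TBH := dualH -> B.
(* ambient type for Bbar (x) H, where Bbar is a subspace of Hom(H,B) *)
Definition TBbH := dualH -> H -> B.

Definition pureBH (b : B) (x : H) : TBH := fun l => l x *: b.
Definition pureBbH (f : H -> B) (x : H) : TBbH := fun l g => l x *: f g.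

Variable pa : H -> B -> B.

(* partial H-module structure on B (x) H: h.(b(x)x) = (h1.b) (x) h2 x *)
Definition pmodBH (h : H) (t : TBH) : TBH :=
  fun l => sw cop h (fun a c => pa a (t (lmf l c))).

(* b # h := b (h1 . 1) (x) h2 *)
Definition smash_elt (b : B) (h : H) : TBH :=
  fun l => sw cop h (fun a c => pureBH (b * pa a 1) c l).

Definition in_smash (t : TBH) : Prop :=
  exists s : seq (B * H), t = fun l => \sum_(p <- s) smash_elt p.1 p.2 l.

(* Standard dilation of the partial module B#H:                         *)
(*   phi(m)(g) = g . m,   (h |> F)(g) = F(g h),                          *)
(*   dilation = H |> phi(B#H) = span { h |> phi(m) : h in H, m in B#H }. *)
Definition phiBH (m : TBH) : H -> TBH := fun g => pmodBH g m.
Definition dil_act (h : H) (F : H -> TBH) : H -> TBH := fun g => F (g * h).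
Definition in_dil (F : H -> TBH) : Prop :=
  exists s : seq (H * TBH), allProp (fun p => in_smash p.2) s /\
    F = fun g l => \sum_(p <- s) dil_act p.1 (phiBH p.2) g l.

(* Globalization Bbar = H |> phi(B) inside Hom(H,B), phi(b)(g) = g . b  *)
Definition phiB (b : B) : H -> B := fun g => pa g b.
Definition glob_act (h : H) (f : H -> B) : H -> B := fun g => f (g * h).
Definition in_Bbar (f : H -> B) : Prop :=
  exists s : seq (H * B), f = fun g => \sum_(p <- s) glob_act p.1 (phiB p.2) g.

Definition in_BbarH (T : TBbH) : Prop :=
  exists s : seq ((H -> B) * H), allProp (fun p => in_Bbar p.1) s /\
    T = fun l g => \sum_(p <- s) pureBbH p.1 p.2 l g.

(* H-module structure on Bbar # H : h |> (f # x) = (h1 |> f) # h2 x *)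
Definition smash_act (h : H) (T : TBbH) : TBbH :=
  fun l g => sw cop h (fun a c => glob_act a (T (lmf l c)) g).

Definition dil_lin (a : k) (F1 F2 : H -> TBH) : H -> TBH :=
  fun g l => a *: F1 g l + F2 g l.
Definition BbH_lin (a : k) (T1 T2 : TBbH) : TBbH :=
  fun l g => a *: T1 l g + T2 l g.
Definition BbH_add (T1 T2 : TBbH) : TBbH := fun l g => T1 l g + T2 l g.
Definition BbH_zero : TBbH := fun l g => 0.

(* "the dilation of B#H is isomorphic, as a left H-module, to a direct
   summand of Bbar # H": an injective H-linear map Phi from the dilation
   into Bbar # H, and an H-submodule C of Bbar # H with
   Bbar # H = Phi(dilation) (+) C. *)
Definition iso_to_direct_summand (Phi : (H -> TBH) -> TBbH) (C : TBbH -> Prop)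
  : Prop :=
  (forall a F1 F2, in_dil F1 -> in_dil F2 ->
      Phi (dil_lin a F1 F2) = BbH_lin a (Phi F1) (Phi F2)) /\
  (forall h F, in_dil F -> Phi (dil_act h F) = smash_act h (Phi F)) /\
  (forall F1 F2, in_dil F1 -> in_dil F2 -> Phi F1 = Phi F2 -> F1 = F2) /\
  (forall F, in_dil F -> in_BbarH (Phi F)) /\
  (forall T, C T -> in_BbarH T) /\
  C BbH_zero /\
  (forall a T1 T2, C T1 -> C T2 -> C (BbH_lin a T1 T2)) /\
  (forall h T, C T -> C (smash_act h T)) /\
  (forall F, in_dil F -> C (Phi F) -> Phi F = BbH_zero) /\
  (forall T, in_BbarH T -> exists F c, in_dil F /\ C c /\ T = BbH_add (Phi F) c).

End PartialAction.

(* The map [F |-> (g |-> F(g1) (1 (x) S^-1(g2)))] is a bijection from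
   Hom(H, B (x) H) onto Hom(H, B) (x) H, inverse to
   [f (x) x |-> (g |-> f(g1) (x) g2 x)], and it intertwines [h |> F = F(- h)]
   with the diagonal action on [Bbar # H].  Hence it maps the dilation of
   [B # H] isomorphically onto the H-submodule generated by the images of the
   [phi(b # x)].  A complement is the H-submodule generated by the differences
   [phi(b) (x) x - image of phi(b # x)].  The two span [Bbar # H] because
   [f(h -) (x) x = h1 |> (f (x) S(h2) x)].  They meet trivially because the
   projection [E : B (x) H -> B # H], [b (x) x |-> b # x], commutes with the
   partial action: the complement corresponds to functions with values in
   [ker E], whereas [E] fixes [B # H].  That [E] is well defined, i.e. that
   [B (x) H -> Hom(H^*, B)] is injective, needs enough linear functionals on
   [H]; they come from maximal subspaces, by Zorn's lemma. *)

From HB Require Import structures.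
From mathcomp Require Import all_boot all_algebra.
From mathcomp Require classical_sets.
From Stdlib Require Import ProofIrrelevance FunctionalExtensionality PropExtensionality.
From Stdlib Require Import Classical IndefiniteDescription.
Set Implicit Arguments.
Unset Strict Implicit.
Unset Printing Implicit Defensive.
Import GRing.Theory.
Local Open Scope ring_scope.

Section AllProp.
Variable T : Type.
Implicit Types (P Q : T -> Prop) (s : seq T).

Lemma sub_allProp P Q s : (forall x, P x -> Q x) -> allProp P s -> allProp Q s.
Proof. by move=> PQ; elim: s => //= x s IH [Px Ps]; split; [exact: PQ | exact: IH]. Qed.

Lemma allPropT P s : (forall x, P x) -> allProp P s.
Proof. by move=> hP; elim: s => //= x s ->. Qed.

Lemma allProp_cat P s1 s2 : allProp P s1 -> allProp P s2 -> allProp P (s1 ++ s2).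
Proof. by elim: s1 => //= x s1 IH [Px Ps1] Ps2; split => //; exact: IH. Qed.

Lemma allProp_map (T' : Type) (P : T' -> Prop) Q (f : T -> T') s :
  (forall x, Q x -> P (f x)) -> allProp Q s -> allProp P (map f s).
Proof. by move=> hf; elim: s => //= x s IH [Qx Qs]; split; [exact: hf | exact: IH]. Qed.
End AllProp.

Section KLinear.
Variable k : fieldType.
Implicit Types U V W : lmodType k.

Section Basic.
Variables (U V : lmodType k) (f : U -> V).
Hypothesis hf : klinear f.
Let f_lin : {linear U -> V} := HB.pack f (GRing.isLinear.Build k U V *:%R f hf).

Lemma klinear0 : f 0 = 0. Proof. exact: (linear0 f_lin). Qed.
Lemma klinearD x y : f (x + y) = f x + f y. Proof. exact: (linearD f_lin). Qed.
Lemma klinearN x : f (- x) = - f x. Proof. exact: (linearN f_lin). Qed.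
Lemma klinearZ a x : f (a *: x) = a *: f x. Proof. exact: (linearZZ f_lin). Qed.
Lemma klinear_sum (I : Type) (r : seq I) (F : I -> U) :
  f (\sum_(i <- r) F i) = \sum_(i <- r) f (F i).
Proof. exact: (linear_sum f_lin). Qed.
End Basic.

Lemma klinear_id U : klinear (fun x : U => x). Proof. by []. Qed.

Lemma klinear_comp U V W (g : V -> W) (f : U -> V) :
  klinear g -> klinear f -> klinear (fun x => g (f x)).
Proof. by move=> hg hf a x y; rewrite hf hg. Qed.

Lemma klinear_linear U U' V (l : {linear U -> V}) (f : U' -> U) :
  klinear f -> klinear (fun x => l (f x)).
Proof. by move=> hf a x y; rewrite hf linearP. Qed.

Lemma klinear_scaler U V (f : U -> V) (c : k) :
  klinear f -> klinear (fun x => c *: f x).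
Proof. by move=> hf a x y; rewrite hf scalerDr !scalerA mulrC. Qed.

Lemma klinear_scalel U V (f : U -> k^o) (v : V) :
  klinear f -> klinear (fun x => f x *: v).
Proof. by move=> hf a x y; rewrite hf scalerDl scalerA. Qed.

Lemma klinear_sumf_in U V (I : Type) (P : I -> Prop) (r : seq I) (F : I -> U -> V) :
  allProp P r -> (forall i, P i -> klinear (F i)) -> klinear (fun x => \sum_(i <- r) F i x).
Proof.
move=> Pr hF a x y; rewrite scaler_sumr -big_split /=.
elim: r Pr => [|i r IH] /=; first by rewrite !big_nil.
by case=> Pi /IH; rewrite !big_cons => ->; rewrite (hF i Pi).
Qed.

Lemma klinear_sumf U V (I : Type) (r : seq I) (F : I -> U -> V) :
  (forall i, klinear (F i)) -> klinear (fun x => \sum_(i <- r) F i x).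
Proof. by move=> hF; apply: (klinear_sumf_in (P := fun _ => True)) => //; exact: allPropT. Qed.

Lemma klinear_mull (A : algType k) U (f : U -> A) (c : A) :
  klinear f -> klinear (fun x => f x * c).
Proof. by move=> hf a x y; rewrite hf mulrDl scalerAl. Qed.

Lemma klinear_mulr (A : algType k) U (f : U -> A) (c : A) :
  klinear f -> klinear (fun x => c * f x).
Proof. by move=> hf a x y; rewrite hf mulrDr scalerAr. Qed.

Lemma klinear_dual (H : lmodType k) (f : H -> k^o) :
  klinear f -> exists l : {linear H -> k^o}, l =1 f.
Proof.
by move=> hf; exists (HB.pack_for {linear H -> k^o} f (GRing.isLinear.Build k H k^o *:%R f hf)).
Qed.
End KLinear.

Section Sweedler.
Variables (k : fieldType) (H : algType k) (cop : H -> seq (H * H)).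
Implicit Types (h : H) (V : zmodType).

Lemma eq_sw V h (b1 b2 : H -> H -> V) : (forall a c, b1 a c = b2 a c) ->
  sw cop h b1 = sw cop h b2.
Proof. by move=> e; apply: eq_bigr => p _; rewrite e. Qed.

Lemma sw_sum V h (I : Type) (r : seq I) (b : I -> H -> H -> V) :
  sw cop h (fun a c => \sum_(i <- r) b i a c) = \sum_(i <- r) sw cop h (b i).
Proof. exact: exchange_big. Qed.

Lemma swD V h (b1 b2 : H -> H -> V) :
  sw cop h (fun a c => b1 a c + b2 a c) = sw cop h b1 + sw cop h b2.
Proof. exact: big_split. Qed.

Lemma swN V h (b : H -> H -> V) : sw cop h (fun a c => - b a c) = - sw cop h b.
Proof. exact: sumrN. Qed.

Lemma sw0 V h : sw cop h (fun _ _ => 0 : V) = 0.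
Proof. exact: big1. Qed.

Lemma swZ (V : lmodType k) h (c : k) (b : H -> H -> V) :
  sw cop h (fun a c' => c *: b a c') = c *: sw cop h b.
Proof. by rewrite /sw scaler_sumr. Qed.

Lemma sw_klinear (U V : lmodType k) h (f : U -> V) (b : H -> H -> U) :
  klinear f -> sw cop h (fun a c => f (b a c)) = f (sw cop h b).
Proof. by move=> hf; rewrite /sw klinear_sum. Qed.

Lemma sw_swap V x y (g : H -> H -> H -> H -> V) :
  sw cop x (fun a b => sw cop y (fun c d => g a b c d))
  = sw cop y (fun c d => sw cop x (fun a b => g a b c d)).
Proof. exact: exchange_big. Qed.
End Sweedler.

Lemma klinear_sw_arg (k : fieldType) (H : algType k) cop cou (S : H -> H)
    (U V : lmodType k) (f : U -> H) (b : H -> H -> V) :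
  is_hopf cop cou S -> kbilinear b -> klinear f -> klinear (fun x => sw cop (f x) b).
Proof.
move=> hH hb hf; apply: (klinear_comp (g := fun h => sw cop h b)) hf.
exact: cop_linear hH _ _ hb.
Qed.

Ltac klinear_hook := fail.
Ltac klin := first
  [ exact: klinear_id | assumption
  | klinear_hook
  | solve [apply: klinear_scalel; klin]
  | solve [apply: klinear_mull; klin] | solve [apply: klinear_mulr; klin]
  | solve [apply: klinear_sumf => ?; klin]
  | solve [apply: klinear_linear; klin]
  | solve [apply: klinear_sw_arg; [eassumption | split => ?; klin | klin]]
  | solve [apply: klinear_comp; [eassumption | klin]] ].
Ltac kbilin := split => *; klin.
Ltac ktrilin := split; [|split] => *; klin.

Section Hopf.
Variables (k : fieldType) (H : algType k) (cop : H -> seq (H * H)) (cou : H -> k)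
  (S : H -> H).
Hypothesis hH : is_hopf cop cou S.
Let klinear_S : klinear S := antip_linear hH.

Lemma sw_counit_r (V : lmodType k) (f : H -> V) h : klinear f ->
  sw cop h (fun a c => cou c *: f a) = f h.
Proof.
move=> hf; rewrite -[in RHS](cou_right hH h) -sw_klinear //.
by apply: eq_sw => a c; rewrite klinearZ.
Qed.

Lemma sw_counit_l (V : lmodType k) (f : H -> V) h : klinear f ->
  sw cop h (fun a c => cou a *: f c) = f h.
Proof.
move=> hf; rewrite -[in RHS](cou_left hH h) -sw_klinear //.
by apply: eq_sw => a c; rewrite klinearZ.
Qed.

Section AntipodeMul.
Variables x y : H.

(* Both sides of [S (x y) = S y S x] equal  S(y1) S(x1) x2 y2 S(x3 y3). *)
Let expansion := sw cop x (fun a b => sw cop y (fun c d =>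
  S c * S a * sw cop b (fun e f => sw cop d (fun e' f' => e * e' * S (f * f'))))).

Let expansion_antipode_r : S y * S x = expansion.
Proof.
have mulS_cou : S y * S x = sw cop x (fun a b => sw cop y (fun c d =>
    cou (b * d) *: (S c * S a))).
  rewrite -[in LHS](sw_counit_r x (f := fun a => S y * S a)); last by klin.
  apply: eq_sw => a b; rewrite -(sw_counit_r y (f := fun c => S c * S a)); last by klin.
  by rewrite -swZ; apply: eq_sw => c d; rewrite (cou_mul hH) -scalerA.
rewrite mulS_cou; apply: eq_sw => a b; apply: eq_sw => c d.
have bl : kbilinear (fun u v : H => u * S v) by kbilin.
by rewrite -(cop_mul hH bl) (antip_right hH) -scalerAr mulr1.
Qed.

Let expansion_antipode_l : expansion = S (x * y).
Proof.
pose G f := sw cop y (fun c d => sw cop d (fun e' f' => S c * e' * S (f * f'))).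
have -> : expansion = sw cop x (fun a b => sw cop b (fun e f =>
    sw cop y (fun c d => sw cop d (fun e' f' => S c * (S a * e) * e' * S (f * f'))))).
  apply: eq_sw => a b; rewrite sw_swap; apply: eq_sw => c d.
  rewrite -(sw_klinear _ _ (f := fun z => S c * S a * z)); last by klin.
  apply: eq_sw => e f; rewrite -(sw_klinear _ _ (f := fun z => S c * S a * z)); last by klin.
  by apply: eq_sw => e' f'; rewrite !mulrA.
rewrite -(cop_coassoc hH); last by ktrilin.
transitivity (sw cop x (fun a f => cou a *: G f)).
  apply: eq_sw => a f; rewrite (sw_klinear cop a (fun u e => S u * e)
    (f := fun z => sw cop y (fun c d => sw cop d (fun e' f' => S c * z * e' * S (f * f')))));
      last by klin.
  rewrite (antip_left hH) /G -swZ; apply: eq_sw => c d; rewrite -swZ; apply: eq_sw => e' f'.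
  by rewrite mulr_algr -!scalerAl.
rewrite sw_counit_l /G; last by klin.
rewrite -(cop_coassoc hH (g := fun c e' f' => S c * e' * S (x * f'))); last by ktrilin.
transitivity (sw cop y (fun c f' => cou c *: S (x * f'))).
  apply: eq_sw => a b.
  rewrite (sw_klinear cop a (fun c d => S c * d) (f := fun z => z * S (x * b))); last by klin.
  by rewrite (antip_left hH) -scalerAl mul1r.
by rewrite (sw_counit_l y (f := fun z => S (x * z))) //; klin.
Qed.

Lemma antipodeM : S (x * y) = S y * S x.
Proof. by rewrite expansion_antipode_r expansion_antipode_l. Qed.
End AntipodeMul.

Lemma antipode1 : S 1 = 1.
Proof.
have := antip_left hH 1; rewrite (cou_one hH) scale1r.
have bl : kbilinear (fun a b : H => S a * b) by kbilin.
by rewrite (cop_one hH bl) mulr1.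
Qed.

Variable Sinv : H -> H.
Hypotheses (SK : cancel S Sinv) (SinvK : cancel Sinv S).

Lemma klinear_Sinv : klinear Sinv.
Proof. by move=> a u v; apply: (can_inj SK); rewrite klinear_S !SinvK. Qed.

Lemma antipodeV_right h : sw cop h (fun c d => d * Sinv c) = cou h *: 1.
Proof.
apply: (can_inj SK); rewrite -sw_klinear // klinearZ // antipode1 -(antip_right hH).
by apply: eq_sw => c d; rewrite antipodeM SinvK.
Qed.

Lemma antipodeV_left h : sw cop h (fun c d => Sinv d * c) = cou h *: 1.
Proof.
apply: (can_inj SK); rewrite -sw_klinear // klinearZ // antipode1 -(antip_left hH).
by apply: eq_sw => c d; rewrite antipodeM SinvK.
Qed.
End Hopf.

Section Separation.
Variables (k : fieldType) (V : lmodType k).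
Implicit Types (A B : V -> Prop) (x y z : V) (xs : seq V).

Fixpoint in_span xs y : Prop :=
  if xs is x :: xs' then exists a, in_span xs' (y - a *: x) else y = 0.

Definition lin_closed A := forall a y z, A y -> A z -> A (a *: y + z).
Definition subspace A := A 0 /\ lin_closed A.

Lemma subspaceN A y : subspace A -> A y -> A (- y).
Proof. by case=> A0 AD Ay; rewrite -[- y]addr0 -scaleN1r; exact: AD. Qed.

Lemma subspaceZ A a y : subspace A -> A y -> A (a *: y).
Proof. by case=> A0 AD Ay; rewrite -[a *: y]addr0; exact: AD. Qed.

Lemma subspaceB A y z : subspace A -> A y -> A z -> A (y - z).
Proof. by move=> sA Ay Az; rewrite -[y]scale1r; apply: sA.2 => //; exact: subspaceN. Qed.

Lemma subspace_span xs : subspace (in_span xs).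
Proof.
elim: xs => [|x xs [IH0 IHD]] /=.
  by split=> // a y z -> ->; rewrite scaler0 addr0.
split; first by exists 0; rewrite scale0r subr0.
move=> a y z [c hc] [d hd]; exists (a * c + d).
rewrite scalerDl -scalerA opprD addrACA -scalerBr.
exact: IHD.
Qed.

Lemma in_span_cons xs x y : in_span xs y -> in_span (x :: xs) y.
Proof. by move=> h; exists 0; rewrite scale0r subr0. Qed.

Lemma in_span_self xs : allProp (in_span xs) xs.
Proof.
elim: xs => //= x xs IH; split; last exact: sub_allProp (@in_span_cons _ x) IH.
by exists 1; rewrite scale1r subrr; exact: (subspace_span xs).1.
Qed.

Lemma exists_maximal_subspace A0 x : subspace A0 -> ~ A0 x ->
  exists A, [/\ subspace A, (forall y, A0 y -> A y), ~ A x &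
    forall B, subspace B -> (forall y, A y -> B y) -> ~ B x -> forall y, B y -> A y].
Proof.
move=> sA0 nA0x.
(* Allowing the empty set makes the union of the empty chain admissible. *)
pose P A := [/\ A = (fun _ => False) \/ (forall y, A0 y -> A y), lin_closed A & ~ A x].
have [A [[A_A0 AD nAx] Amax]] : exists A, P A /\
    forall B, classical_sets.proper A B -> ~ P B.
  apply: classical_sets.Zorn_bigcup => F FP Ftot; split.
  - case: (classic (exists2 X, F X & forall y, A0 y -> X y)) => [[X FX XA0]|noA0].
      by right=> y /XA0 Xy; exists X.
    left; apply: functional_extensionality => y; apply: propositional_extensionality.
    split=> // -[X FX Xy]; have [[X0|XA0] _ _] := FP X FX; first by rewrite X0 in Xy.
    by apply: noA0; exists X.
  - move=> a y z [X FX Xy] [Y FY Yz].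
    have [XY|YX] := Ftot X Y FX FY.
      by have [_ YD _] := FP Y FY; exists Y => //; apply: YD => //; exact: XY.
    by have [_ XD _] := FP X FX; exists X => //; apply: XD => //; exact: YX.
  - by case=> X FX Xx; have [_ _] := FP X FX; apply.
have {}A_A0 : forall y, A0 y -> A y.
  case: A_A0 => // A_empty; exfalso; apply: (Amax A0); last by split=> //; [right | exact: sA0.2].
  by rewrite A_empty; split=> // /(_ 0 sA0.1).
exists A; split=> //; first by split; [exact: A_A0 sA0.1 | exact: AD].
move=> B sB AB nBx y By; apply: NNPP => nAy.
by apply: (Amax B); [split=> // /(_ y By) | split; [right=> v /A_A0 /AB | exact: sB.2 |]].
Qed.

Lemma maximal_subspace_codim1 A x : subspace A -> ~ A x ->
  (forall B, subspace B -> (forall y, A y -> B y) -> ~ B x -> forall y, B y -> A y) ->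
  forall z, exists a, A (z - a *: x).
Proof.
move=> sA nAx Amax z; apply: NNPP => nz.
pose B w := exists c, A (w - c *: z).
have nAz : ~ A z by move=> Az; apply: nz; exists 0; rewrite scale0r subr0.
apply/nAz/(Amax B); last by exists 1; rewrite scale1r subrr; exact: sA.1.
- split; first by exists 0; rewrite scale0r subr0; exact: sA.1.
  move=> a y w [c1 h1] [c2 h2]; exists (a * c1 + c2).
  rewrite scalerDl -scalerA opprD addrACA -scalerBr; exact: sA.2.
- by move=> y Ay; exists 0; rewrite scale0r subr0.
case=> c hc; have [c0|cn0] := eqVneq c 0; first by apply: nAx; rewrite -(subr0 x) -(scale0r z) -c0.
apply: nz; exists c^-1.
have -> : z - c^-1 *: x = (- c^-1) *: (x - c *: z).
  by rewrite scalerBr scalerA mulNr mulVf // scaleN1r opprK scaleNr addrC.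
exact: subspaceZ.
Qed.

Lemma codim1_functional A x : subspace A -> ~ A x ->
  (forall z, exists a, A (z - a *: x)) ->
  exists l : {linear V -> k^o}, l x = 1 /\ forall y, A y -> l y = 0.
Proof.
move=> sA nAx hz.
have coef_uniq z a a' : A (z - a *: x) -> A (z - a' *: x) -> a = a'.
  move=> h h'; apply: NNPP => /eqP; rewrite eq_sym -subr_eq0 => ne; apply: nAx.
  rewrite -(scalerK ne x); apply: subspaceZ => //.
  by have := subspaceB sA h h'; rewrite opprB addrC addrA subrK -scalerBl.
pose f z : k^o := proj1_sig (constructive_indefinite_description _ (hz z)).
have fP z : A (z - f z *: x).
  by rewrite /f; case: constructive_indefinite_description.
have hf : klinear f.
  move=> a y z; apply: (coef_uniq (a *: y + z)); first exact: fP.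
  rewrite scalerDl -scalerA opprD addrACA -scalerBr; exact: sA.2 (fP y) (fP z).
have [l hl] := klinear_dual hf; exists l; split=> [|y Ay]; rewrite hl.
  by apply: (coef_uniq x) (fP x) _; rewrite scale1r subrr; exact: sA.1.
by apply: (coef_uniq y) (fP y) _; rewrite scale0r subr0.
Qed.

Lemma separation xs x : ~ in_span xs x ->
  exists l : {linear V -> k^o}, l x = 1 /\ allProp (fun y => l y = 0) xs.
Proof.
move=> nx; have [A [sA A_span nAx Amax]] := exists_maximal_subspace (subspace_span xs) nx.
have [l [lx lA]] := codim1_functional sA nAx (maximal_subspace_codim1 sA nAx Amax).
by exists l; split=> //; apply: sub_allProp (in_span_self xs) => y /A_span; exact: lA.
Qed.
End Separation.

Section TensorVanishing.
Variables (k : fieldType) (H B : lmodType k).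
Implicit Types (s : seq (B * H)) (l : {linear H -> k^o}).

Lemma tensor_absorb s x b : in_span (map snd s) x ->
  exists s', size s' = size s /\
   forall (V : lmodType k) (Psi : H -> B -> V), kbilinear Psi ->
     Psi x b + \sum_(p <- s) Psi p.2 p.1 = \sum_(p <- s') Psi p.2 p.1.
Proof.
elim: s x => [|[b1 x1] s IH] x /=.
  move=> ->; exists [::]; split=> // V Psi [Psi_l _].
  by rewrite !big_nil (klinear0 (Psi_l b)) addr0.
case=> a /IH [s' [size_s' Psi_s']]; exists ((b1 + a *: b, x1) :: s'); split.
  by rewrite /= size_s'.
move=> V Psi hPsi; rewrite !big_cons /= -(Psi_s' V Psi hPsi).
have [Psi_l Psi_r] := hPsi.
rewrite (klinearD (Psi_l b)) (klinearN (Psi_l b)) (klinearZ (Psi_l b)).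
rewrite (klinearD (Psi_r x1)) (klinearZ (Psi_r x1)).
by rewrite addrACA -!addrA addKr addrCA.
Qed.

(* Injectivity of [B (x) H -> Hom(H^*, B)], [b (x) x |-> (l |-> l x *: b)]. *)
Lemma bilinear_tensor_eq0 s : (forall l, \sum_(p <- s) l p.2 *: p.1 = 0) ->
  forall (V : lmodType k) (Psi : H -> B -> V), kbilinear Psi ->
  \sum_(p <- s) Psi p.2 p.1 = 0.
Proof.
move: {2}(size s) (leqnn (size s)) => n; elim: n s => [|n IH] [|[b x] s] //= size_s s0 V Psi hPsi;
  rewrite ?big_nil // big_cons /=.
case: (classic (in_span (map snd s) x)) => [x_span | nx].
  have [s' [size_s' Psi_s']] := tensor_absorb b x_span.
  rewrite Psi_s' //; apply: IH => // [|l]; first by rewrite size_s'.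
  have tensor_l : kbilinear (fun (y : H) (c : B) => (l y : k) *: c).
    by split=> ?; [apply: klinear_scalel; exact: klinear_linear | exact: klinear_scaler].
  by rewrite -(Psi_s' _ _ tensor_l); have := s0 l; rewrite big_cons.
have [l [lx ls]] := separation nx.
have b0 : b = 0.
  have := s0 l; rewrite big_cons /= lx scale1r.
  suff -> : \sum_(p <- s) l p.2 *: p.1 = 0 by rewrite addr0.
  elim: s ls {size_s s0 nx} => [|[b' x'] s' IHs] /=; first by rewrite big_nil.
  by case=> lx' /IHs; rewrite big_cons /= lx' scale0r add0r.
rewrite b0 (klinear0 (hPsi.2 x)) add0r; apply: IH => // l'.
by have := s0 l'; rewrite big_cons /= b0 scaler0 add0r.
Qed.
End TensorVanishing.

Lemma linear_ext (k : fieldType) (U V : lmodType k) (f g : {linear U -> V}) :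
  f =1 g -> f = g.
Proof.
case: f g => f cf [g cg] /= /functional_extensionality fg; subst g.
case: cf => [[[a1 a1']] [b1]]; case: cg => [[[a2 a2']] [b2]].
by rewrite (proof_irrelevance _ a1 a2) (proof_irrelevance _ a1' a2') (proof_irrelevance _ b1 b2).
Qed.

Section SmashDilation.
Variables (k : fieldType) (H B : algType k) (cop : H -> seq (H * H)) (cou : H -> k)
  (S : H -> H) (pa : H -> B -> B).
Hypotheses (hH : is_hopf cop cou S) (hpa : sym_partial_action cop pa).
Variable Sinv : H -> H.
Hypotheses (SK : cancel S Sinv) (SinvK : cancel Sinv S).

Let klinear_S : klinear S := antip_linear hH.
Let klinear_Sinv : klinear Sinv := klinear_Sinv hH SK SinvK.
Let klinear_pa_l : forall b, klinear (fun h => pa h b) := (pa_bilinear hpa).1.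
Let klinear_pa_r : forall h, klinear (pa h) := (pa_bilinear hpa).2.

Lemma lmfM (l : dualH H) c c' : lmf (lmf l c) c' = lmf l (c * c') :> dualH H.
Proof. by apply: linear_ext => x; rewrite /= /lmf /= mulrA. Qed.

Lemma lmf1 (l : dualH H) : lmf l 1 = l :> dualH H.
Proof. by apply: linear_ext => x; rewrite /= /lmf /= mul1r. Qed.

(* Elements of the ambient types are arbitrary functions on the dual of [H];
   the following predicates single out those depending linearly on the
   tensor factor [H] (and on the variable of [Hom(H, _)]), which is what the
   Sweedler calculus needs. *)
Definition regular_BH (t : TBH H B) := forall l, klinear (fun c => t (lmf l c)).
Definition regular_dil (F : H -> TBH H B) :=
  forall l, kbilinear (fun g c => F g (lmf l c)).
Definition regular_BbH (T : TBbH H B) :=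
  forall l, kbilinear (fun g c => T (lmf l c) g).

Section RegularLinear.
Variable U : lmodType k.
Implicit Types (f : U -> H) (l : dualH H) (a c : H).

Lemma klinear_regular_BH f l t : klinear f -> regular_BH t ->
  klinear (fun x => t (lmf l (f x))).
Proof. by move=> hf ht; exact: (klinear_comp (g := fun c => t (lmf l c)) (ht l) hf). Qed.

Lemma klinear_regular_BH_lmf f l c t : klinear f -> regular_BH t ->
  klinear (fun x => t (lmf (lmf l (f x)) c)).
Proof.
move=> hf ht; have -> : (fun x => t (lmf (lmf l (f x)) c)) = fun x => t (lmf l (f x * c)).
  by apply: functional_extensionality => x; rewrite lmfM.
by apply: klinear_regular_BH => //; exact: klinear_mull.
Qed.

Lemma klinear_regular_dil_l f l c F : klinear f -> regular_dil F ->
  klinear (fun x => F (f x) (lmf l c)).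
Proof. by move=> hf hF; exact: (klinear_comp (g := fun g => F g (lmf l c)) ((hF l).1 c) hf). Qed.

Lemma klinear_regular_dil_l1 f l F : klinear f -> regular_dil F ->
  klinear (fun x => F (f x) l).
Proof. by move=> hf hF; have := klinear_regular_dil_l l 1 hf hF; rewrite lmf1. Qed.

Lemma klinear_regular_dil_r f l a F : klinear f -> regular_dil F ->
  klinear (fun x => F a (lmf l (f x))).
Proof. by move=> hf hF; exact: (klinear_comp (g := fun c => F a (lmf l c)) ((hF l).2 a) hf). Qed.

Lemma klinear_regular_dil_r_lmf f l a c F : klinear f -> regular_dil F ->
  klinear (fun x => F a (lmf (lmf l (f x)) c)).
Proof.
move=> hf hF; have -> : (fun x => F a (lmf (lmf l (f x)) c)) = fun x => F a (lmf l (f x * c)).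
  by apply: functional_extensionality => x; rewrite lmfM.
by apply: klinear_regular_dil_r => //; exact: klinear_mull.
Qed.

Lemma klinear_regular_BbH_l f l c T : klinear f -> regular_BbH T ->
  klinear (fun x => T (lmf l c) (f x)).
Proof. by move=> hf hT; exact: (klinear_comp (g := fun g => T (lmf l c) g) ((hT l).1 c) hf). Qed.

Lemma klinear_regular_BbH_l1 f l T : klinear f -> regular_BbH T ->
  klinear (fun x => T l (f x)).
Proof. by move=> hf hT; have := klinear_regular_BbH_l l 1 hf hT; rewrite lmf1. Qed.

Lemma klinear_regular_BbH_r f l a T : klinear f -> regular_BbH T ->
  klinear (fun x => T (lmf l (f x)) a).
Proof. by move=> hf hT; exact: (klinear_comp (g := fun c => T (lmf l c) a) ((hT l).2 a) hf). Qed.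

Lemma klinear_regular_BbH_r_lmf f l a c T : klinear f -> regular_BbH T ->
  klinear (fun x => T (lmf (lmf l (f x)) c) a).
Proof.
move=> hf hT; have -> : (fun x => T (lmf (lmf l (f x)) c) a) = fun x => T (lmf l (f x * c)) a.
  by apply: functional_extensionality => x; rewrite lmfM.
by apply: klinear_regular_BbH_r => //; exact: klinear_mull.
Qed.

Lemma klinear_pa_comp_l f b : klinear f -> klinear (fun x => pa (f x) b).
Proof. exact: klinear_comp (klinear_pa_l b). Qed.

Lemma klinear_pa_comp_r (f : U -> B) h : klinear f -> klinear (fun x => pa h (f x)).
Proof. exact: klinear_comp (klinear_pa_r h). Qed.
End RegularLinear.

Ltac klinear_hook ::= first
  [ solve [apply: klinear_pa_comp_l; klin] | solve [apply: klinear_pa_comp_r; klin]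
  | solve [apply: klinear_regular_BH; [klin | eassumption]]
  | solve [apply: klinear_regular_BH_lmf; [klin | eassumption]]
  | solve [apply: klinear_regular_dil_l1; [klin | eassumption]]
  | solve [apply: klinear_regular_dil_r; [klin | eassumption]]
  | solve [apply: klinear_regular_dil_r_lmf; [klin | eassumption]]
  | solve [apply: klinear_regular_BbH_l1; [klin | eassumption]]
  | solve [apply: klinear_regular_BbH_r; [klin | eassumption]]
  | solve [apply: klinear_regular_BbH_r_lmf; [klin | eassumption]] ].

(* [t (lmf l c)] is [t] with its [H]-factor multiplied on the left by [c]. *)
Definition dil_of_smash (T : TBbH H B) : H -> TBH H B :=
  fun g l => sw cop g (fun a c => T (lmf l c) a).
Definition smash_of_dil (F : H -> TBH H B) : TBbH H B :=
  fun l g => sw cop g (fun a c => F a (lmf l (Sinv c))).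

Lemma smash_of_dilK F : regular_dil F -> dil_of_smash (smash_of_dil F) = F.
Proof.
move=> hF; apply: functional_extensionality => g; apply: functional_extensionality => l.
transitivity (sw cop g (fun a c => sw cop a (fun a' c' => F a' (lmf l (c * Sinv c'))))).
  by apply: eq_sw => a c; apply: eq_sw => a' c'; rewrite lmfM.
rewrite (cop_coassoc hH); last by ktrilin.
transitivity (sw cop g (fun a c => cou c *: F a l)); last by rewrite (sw_counit_r hH) //; klin.
apply: eq_sw => a c.
rewrite (sw_klinear cop c (fun a' c' => c' * Sinv a') (f := fun z => F a (lmf l z))); last by klin.
by rewrite (antipodeV_right hH SK SinvK) (klinearZ ((hF l).2 a)) lmf1.
Qed.

Lemma dil_of_smashK T : regular_BbH T -> smash_of_dil (dil_of_smash T) = T.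
Proof.
move=> hT; apply: functional_extensionality => l; apply: functional_extensionality => g.
transitivity (sw cop g (fun a c => sw cop a (fun a' c' => T (lmf l (Sinv c * c')) a'))).
  by apply: eq_sw => a c; apply: eq_sw => a' c'; rewrite lmfM.
rewrite (cop_coassoc hH); last by ktrilin.
transitivity (sw cop g (fun a c => cou c *: T l a)); last by rewrite (sw_counit_r hH) //; klin.
apply: eq_sw => a c.
rewrite (sw_klinear cop c (fun a' c' => Sinv c' * a') (f := fun z => T (lmf l z) a)); last by klin.
by rewrite (antipodeV_left hH SK SinvK) (klinearZ ((hT l).2 a)) lmf1.
Qed.

Lemma regular_in_smash t : in_smash cop pa t -> regular_BH t.
Proof. by case=> s -> l /=; rewrite /smash_elt /pureBH /lmf /=; klin. Qed.

Lemma regular_phiBH m : regular_BH m -> regular_dil (phiBH cop pa m).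
Proof. by move=> hm l; split=> [c|a]; rewrite /phiBH /pmodBH; klin. Qed.

Lemma regular_dil_act h F : regular_dil F -> regular_dil (dil_act h F).
Proof. by move=> hF l; split=> [c|a]; rewrite /dil_act; klin. Qed.

Lemma regular_smash_of_dil F : regular_dil F -> regular_BbH (smash_of_dil F).
Proof. by move=> hF l; split=> [c|a]; rewrite /smash_of_dil; klin. Qed.

Lemma regular_smash_act h T : regular_BbH T -> regular_BbH (smash_act cop h T).
Proof. by move=> hT l; split=> [c|a]; rewrite /smash_act /glob_act; klin. Qed.

Lemma regular_in_dil F : in_dil cop pa F -> regular_dil F.
Proof.
case=> s [hs ->] l; split=> [c|a] /=; apply: (klinear_sumf_in hs) => p /regular_in_smash hp.
  exact: (regular_dil_act p.1 (regular_phiBH hp) l).1.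
exact: (regular_dil_act p.1 (regular_phiBH hp) l).2.
Qed.

Lemma klinear_in_Bbar f : in_Bbar pa f -> klinear f.
Proof. by case=> s ->; rewrite /glob_act /phiB; klin. Qed.

Lemma regular_in_BbarH T : in_BbarH pa T -> regular_BbH T.
Proof.
case=> s [hs ->] l; split=> [c|a] /=; rewrite /pureBbH; last by rewrite /lmf; klin.
by apply: (klinear_sumf_in hs) => p /klinear_in_Bbar hp; klin.
Qed.

Lemma dil_of_smash_act h T : regular_BbH T ->
  dil_of_smash (smash_act cop h T) = dil_act h (dil_of_smash T).
Proof.
move=> hT; apply: functional_extensionality => g; apply: functional_extensionality => l.
have bl : kbilinear (fun a c => T (lmf l c) a) by kbilin.
rewrite /dil_of_smash /dil_act /smash_act /glob_act (cop_mul hH bl g h).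
by apply: eq_sw => a b; apply: eq_sw => c d; rewrite lmfM.
Qed.

Lemma smash_of_dil_act h F : regular_dil F ->
  smash_of_dil (dil_act h F) = smash_act cop h (smash_of_dil F).
Proof.
move=> hF; rewrite -[LHS]dil_of_smashK; last exact/regular_smash_of_dil/regular_dil_act.
rewrite smash_of_dilK; last exact: regular_dil_act.
rewrite -[RHS]dil_of_smashK; last exact/regular_smash_act/regular_smash_of_dil.
by rewrite dil_of_smash_act ?smash_of_dilK //; exact: regular_smash_of_dil.
Qed.

Definition BbH_subspace (P : TBbH H B -> Prop) :=
  P (@BbH_zero _ H B) /\ forall a T1 T2, P T1 -> P T2 -> P (BbH_lin a T1 T2).

Lemma BbH_subspace_sum_in P (I : Type) (Q : I -> Prop) (r : seq I) (G : I -> TBbH H B) :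
  BbH_subspace P -> allProp Q r -> (forall i, Q i -> P (G i)) ->
  P (fun l g => \sum_(i <- r) G i l g).
Proof.
move=> [P0 PD] + PG; elim: r => [_|i r IH /= [Qi /IH Pr]].
  by rewrite (_ : (fun l g => _) = @BbH_zero _ H B) //;
     do 2!apply: functional_extensionality => ?; rewrite big_nil.
rewrite (_ : (fun l g => _) = BbH_lin 1 (G i) (fun l g => \sum_(j <- r) G j l g)).
  by apply: PD => //; exact: PG.
by do 2!apply: functional_extensionality => ?; rewrite big_cons /BbH_lin scale1r.
Qed.

Lemma BbH_subspace_sum P (I : Type) (r : seq I) (G : I -> TBbH H B) :
  BbH_subspace P -> (forall i, P (G i)) -> P (fun l g => \sum_(i <- r) G i l g).
Proof.
by move=> sP PG; apply: (BbH_subspace_sum_in (Q := fun _ => True) sP) => //; exact: allPropT.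
Qed.

Lemma BbH_subspaceB P T1 T2 : BbH_subspace P -> P T1 -> P T2 ->
  P (fun l g => T1 l g - T2 l g).
Proof.
move=> [_ PD] P1 P2; rewrite (_ : (fun l g => _) = BbH_lin (-1) T2 T1); first exact: PD.
by do 2!apply: functional_extensionality => ?; rewrite /BbH_lin scaleN1r addrC.
Qed.

Lemma in_Bbar_phiB b : in_Bbar pa (phiB pa b).
Proof.
exists [:: (1, b)]; apply: functional_extensionality => g.
by rewrite big_seq1 /glob_act /phiB /= mulr1.
Qed.

Lemma in_Bbar_glob_act h f : in_Bbar pa f -> in_Bbar pa (glob_act h f).
Proof.
case=> s ->; exists (map (fun p => (h * p.1, p.2)) s); apply: functional_extensionality => g.
by rewrite /glob_act big_map; apply: eq_bigr => p _ /=; rewrite mulrA.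
Qed.

Lemma in_Bbar_scale a f : in_Bbar pa f -> in_Bbar pa (fun g => a *: f g).
Proof.
case=> s ->; exists (map (fun p => (p.1, a *: p.2)) s); apply: functional_extensionality => g.
rewrite big_map scaler_sumr; apply: eq_bigr => p _ /=.
by rewrite /glob_act /phiB klinearZ.
Qed.

Lemma BbH_subspace_in_BbarH : BbH_subspace (in_BbarH pa).
Proof.
split.
  by exists [::]; split=> //; do 2!apply: functional_extensionality => ?; rewrite big_nil.
move=> a T1 T2 [s1 [h1 ->]] [s2 [h2 ->]].
exists (map (fun p => (fun g => a *: p.1 g, p.2)) s1 ++ s2); split.
  by apply: allProp_cat => //; apply: allProp_map h1 => p; exact: in_Bbar_scale.
do 2!apply: functional_extensionality => ?.
rewrite /BbH_lin big_cat big_map scaler_sumr; congr (_ + _); apply: eq_bigr => p _.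
by rewrite /pureBbH /= !scalerA mulrC.
Qed.

Lemma in_BbarH_pure f x : in_Bbar pa f -> in_BbarH pa (pureBbH f x).
Proof.
move=> hf; exists [:: (f, x)]; split=> //=.
by do 2!apply: functional_extensionality => ?; rewrite big_seq1.
Qed.

Lemma in_BbarH_smash_act h T : in_BbarH pa T -> in_BbarH pa (smash_act cop h T).
Proof.
case=> s [hs ->].
have -> : smash_act cop h (fun l g => \sum_(p <- s) pureBbH p.1 p.2 l g) =
  fun l g => \sum_(p <- s) (fun l g =>
    \sum_(q <- cop h) pureBbH (glob_act q.1 p.1) (q.2 * p.2) l g) l g.
  do 2!apply: functional_extensionality => ?.
  rewrite /smash_act /glob_act /pureBbH /= sw_sum; apply: eq_bigr => p _.
  by apply: eq_bigr => q _; rewrite /lmf.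
apply: (BbH_subspace_sum_in BbH_subspace_in_BbarH hs) => p hp.
apply: (BbH_subspace_sum _ BbH_subspace_in_BbarH) => q.
by apply: in_BbarH_pure; exact: in_Bbar_glob_act.
Qed.

(* [glob_smash_elt b x] is [b # x] with [phi] applied to its [B]-factor, i.e. the
   image of [phi (b # x)]; the [compl_gen b x] generate the complement. *)
Definition glob_smash_elt b x : TBbH H B :=
  fun l g => sw cop x (fun a c => pureBbH (phiB pa (b * pa a 1)) c l g).
Definition compl_gen b x : TBbH H B :=
  fun l g => pureBbH (phiB pa b) x l g - glob_smash_elt b x l g.

Lemma in_BbarH_glob_smash_elt b x : in_BbarH pa (glob_smash_elt b x).
Proof.
apply: (BbH_subspace_sum _ BbH_subspace_in_BbarH) => q.
by apply: in_BbarH_pure; exact: in_Bbar_phiB.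
Qed.

Lemma dil_of_smash_glob_smash_elt b x :
  dil_of_smash (glob_smash_elt b x) = phiBH cop pa (smash_elt cop pa b x).
Proof.
do 2!apply: functional_extensionality => ?.
rewrite /dil_of_smash /glob_smash_elt /phiBH /pmodBH /smash_elt /pureBbH /pureBH /phiB.
apply: eq_sw => a c; rewrite -sw_klinear //; apply: eq_sw => a' c'.
by rewrite klinearZ.
Qed.

Lemma smash_of_dil_phiBH_smash_elt b x :
  smash_of_dil (phiBH cop pa (smash_elt cop pa b x)) = glob_smash_elt b x.
Proof.
rewrite -dil_of_smash_glob_smash_elt dil_of_smashK //.
exact/regular_in_BbarH/in_BbarH_glob_smash_elt.
Qed.

Definition dil_zero : H -> TBH H B := fun _ _ => 0.

Lemma in_smash_scale a t : in_smash cop pa t -> in_smash cop pa (fun l => a *: t l).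
Proof.
case=> s ->; exists (map (fun q => (a *: q.1, q.2)) s); apply: functional_extensionality => l.
rewrite big_map scaler_sumr; apply: eq_bigr => q _ /=.
rewrite /smash_elt /pureBH -swZ; apply: eq_sw => x y.
by rewrite -scalerAl !scalerA mulrC.
Qed.

Lemma in_dil0 : in_dil cop pa dil_zero.
Proof. by exists [::]; split=> //; do 2!apply: functional_extensionality => ?; rewrite big_nil. Qed.

Lemma in_dil_lin a F1 F2 : in_dil cop pa F1 -> in_dil cop pa F2 ->
  in_dil cop pa (dil_lin a F1 F2).
Proof.
move=> [s1 [h1 ->]] [s2 [h2 ->]].
exists (map (fun p => (p.1, fun l => a *: p.2 l)) s1 ++ s2); split.
  by apply: allProp_cat => //; apply: allProp_map h1 => p /=; exact: in_smash_scale.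
do 2!apply: functional_extensionality => ?.
rewrite /dil_lin big_cat big_map scaler_sumr; congr (_ + _); apply: eq_bigr => p _.
by rewrite /dil_act /phiBH /pmodBH -swZ; apply: eq_sw => x y; rewrite klinearZ.
Qed.

Lemma in_dil_phiBH m : in_smash cop pa m -> in_dil cop pa (phiBH cop pa m).
Proof.
move=> hm; exists [:: (1, m)]; split=> //=.
by do 2!apply: functional_extensionality => ?; rewrite big_seq1 /dil_act mulr1.
Qed.

Lemma in_dil_act h F : in_dil cop pa F -> in_dil cop pa (dil_act h F).
Proof.
case=> s [hs ->]; exists (map (fun p => (h * p.1, p.2)) s); split; first exact: allProp_map hs.
do 2!apply: functional_extensionality => ?.
by rewrite /dil_act big_map; apply: eq_bigr => p _ /=; rewrite mulrA.
Qed.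

Lemma smash_of_dil_sum (I : Type) (r : seq I) (G : I -> H -> TBH H B) :
  smash_of_dil (fun g l => \sum_(i <- r) G i g l) =
  fun l g => \sum_(i <- r) smash_of_dil (G i) l g.
Proof. by do 2!apply: functional_extensionality => ?; rewrite /smash_of_dil sw_sum. Qed.

Lemma phiBH_sum (I : Type) (r : seq I) (m : I -> TBH H B) :
  phiBH cop pa (fun l => \sum_(i <- r) m i l) =
  fun g l => \sum_(i <- r) phiBH cop pa (m i) g l.
Proof.
do 2!apply: functional_extensionality => ?.
by rewrite /phiBH /pmodBH -sw_sum; apply: eq_sw => x y; rewrite klinear_sum.
Qed.

Lemma smash_of_dil_lin a F1 F2 :
  smash_of_dil (dil_lin a F1 F2) = BbH_lin a (smash_of_dil F1) (smash_of_dil F2).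
Proof. by do 2!apply: functional_extensionality => ?; rewrite /smash_of_dil swD swZ. Qed.

Lemma smash_of_dil0 : smash_of_dil dil_zero = @BbH_zero _ H B.
Proof. by do 2!apply: functional_extensionality => ?; rewrite /smash_of_dil sw0. Qed.

Lemma in_BbarH_smash_of_dil F : in_dil cop pa F -> in_BbarH pa (smash_of_dil F).
Proof.
case=> s [hs ->]; rewrite (smash_of_dil_sum s (fun p => dil_act p.1 (phiBH cop pa p.2))).
apply: (BbH_subspace_sum_in BbH_subspace_in_BbarH hs) => p hp.
rewrite smash_of_dil_act; last exact/regular_phiBH/regular_in_smash.
apply: in_BbarH_smash_act; case: hp => s' ->.
rewrite (phiBH_sum s' (fun q => smash_elt cop pa q.1 q.2)) smash_of_dil_sum.
apply: (BbH_subspace_sum _ BbH_subspace_in_BbarH) => q.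
by rewrite smash_of_dil_phiBH_smash_elt; exact: in_BbarH_glob_smash_elt.
Qed.

Inductive compl : TBbH H B -> Prop :=
  | compl0 : compl (@BbH_zero _ H B)
  | compl_gen_in b x : compl (compl_gen b x)
  | compl_lin a T1 T2 : compl T1 -> compl T2 -> compl (BbH_lin a T1 T2)
  | compl_act h T : compl T -> compl (smash_act cop h T).

Lemma in_BbarH_compl T : compl T -> in_BbarH pa T.
Proof.
elim=> [|b x|a T1 T2 _ h1 _ h2|h T' _ hT].
- exact: BbH_subspace_in_BbarH.1.
- apply: BbH_subspaceB; first exact: BbH_subspace_in_BbarH.
    by apply: in_BbarH_pure; exact: in_Bbar_phiB.
  exact: in_BbarH_glob_smash_elt.
- exact: BbH_subspace_in_BbarH.2.
- exact: in_BbarH_smash_act.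
Qed.

Definition dil_plus_compl T := exists F c,
  [/\ in_dil cop pa F, compl c & T = BbH_add (smash_of_dil F) c].

Lemma BbH_subspace_dil_plus_compl : BbH_subspace dil_plus_compl.
Proof.
split.
  exists dil_zero, (@BbH_zero _ H B); split; [exact: in_dil0 | exact: compl0 |].
  by rewrite smash_of_dil0; do 2!apply: functional_extensionality => ?; rewrite /BbH_add addr0.
move=> a T1 T2 [F1 [c1 [hF1 hc1 ->]]] [F2 [c2 [hF2 hc2 ->]]].
exists (dil_lin a F1 F2), (BbH_lin a c1 c2); split; [exact: in_dil_lin | exact: compl_lin |].
rewrite smash_of_dil_lin; do 2!apply: functional_extensionality => ?.
by rewrite /BbH_add /BbH_lin scalerDr addrACA.
Qed.

Lemma smash_actD h (T1 T2 : TBbH H B) :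
  smash_act cop h (BbH_add T1 T2) = BbH_add (smash_act cop h T1) (smash_act cop h T2).
Proof.
by do 2!apply: functional_extensionality => ?; rewrite /smash_act /BbH_add /glob_act swD.
Qed.

Lemma dil_plus_compl_act h T : dil_plus_compl T -> dil_plus_compl (smash_act cop h T).
Proof.
case=> F [c [hF hc ->]]; exists (dil_act h F), (smash_act cop h c).
split; [exact: in_dil_act | exact: compl_act |].
by rewrite smash_actD smash_of_dil_act //; exact: regular_in_dil.
Qed.

Lemma dil_plus_compl_pure b x : dil_plus_compl (pureBbH (phiB pa b) x).
Proof.
exists (phiBH cop pa (smash_elt cop pa b x)), (compl_gen b x); split.
- apply: in_dil_phiBH; exists [:: (b, x)].
  by apply: functional_extensionality => l; rewrite big_seq1.
- exact: compl_gen_in.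
rewrite smash_of_dil_phiBH_smash_elt; do 2!apply: functional_extensionality => ?.
by rewrite /BbH_add /compl_gen addrC subrK.
Qed.

(* [f (h .) (x) x = h1 |> (f (x) S(h2) x)]: every pure tensor of [Bbar # H] is
   reached from those of the form [phi(b) (x) x] by the action of [H]. *)
Lemma pure_glob_act (f : H -> B) h x : klinear f ->
  pureBbH (glob_act h f) x =
  fun l g => sw cop h (fun a c => smash_act cop a (pureBbH f (S c * x)) l g).
Proof.
move=> hf; apply: functional_extensionality => l; apply: functional_extensionality => g.
rewrite /smash_act /glob_act /pureBbH /=; symmetry.
transitivity (sw cop h (fun a c => sw cop a (fun a' c' => l (c' * S c * x) *: f (g * a')))).
  by apply: eq_sw => a c; apply: eq_sw => a' c'; rewrite /lmf /= mulrA.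
rewrite (cop_coassoc hH); last by ktrilin.
transitivity (sw cop h (fun a c => cou c *: (l x *: f (g * a)))); last first.
  by rewrite (sw_counit_r hH) //; klin.
apply: eq_sw => a c.
rewrite (sw_klinear cop c (fun a' c' => a' * S c') (f := fun z => l (z * x) *: f (g * a)));
  last by klin.
by rewrite (antip_right hH) -scalerAl mul1r linearZ /= -scalerA.
Qed.

Lemma in_BbarH_dil_plus_compl T : in_BbarH pa T -> dil_plus_compl T.
Proof.
case=> s [hs ->]; apply: (BbH_subspace_sum_in BbH_subspace_dil_plus_compl hs) => -[f x] /= [r ->].
have -> : pureBbH (fun g => \sum_(i <- r) glob_act i.1 (phiB pa i.2) g) x =
    fun l g => \sum_(i <- r) pureBbH (glob_act i.1 (phiB pa i.2)) x l g.
  by do 2!apply: functional_extensionality => ?; rewrite /pureBbH scaler_sumr.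
apply: (BbH_subspace_sum _ BbH_subspace_dil_plus_compl) => i.
rewrite pure_glob_act /phiB; last by klin.
apply: (BbH_subspace_sum _ BbH_subspace_dil_plus_compl) => q.
exact/dil_plus_compl_act/dil_plus_compl_pure.
Qed.

Definition tensor (s : seq (B * H)) : TBH H B := fun l => \sum_(p <- s) pureBH p.1 p.2 l.
Definition smash_tensor (s : seq (B * H)) : TBH H B :=
  fun l => \sum_(p <- s) smash_elt cop pa p.1 p.2 l.

(* The graph of the projection [B (x) H -> B # H], [b (x) x |-> b # x]. *)
Definition smash_proj (t e : TBH H B) := exists s, t = tensor s /\ e = smash_tensor s.

Lemma kbilinear_smash_elt l : kbilinear (fun (x : H) (b : B) => smash_elt cop pa b x l).
Proof. by split=> ?; rewrite /smash_elt /pureBH; klin. Qed.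

Lemma smash_proj_fun t e1 e2 : smash_proj t e1 -> smash_proj t e2 -> e1 = e2.
Proof.
move=> [s1 [-> ->]] [s2 [t12 ->]]; apply: functional_extensionality => l.
pose s := s1 ++ map (fun p => (- p.1, p.2)) s2.
have s0 (l' : dualH H) : \sum_(p <- s) l' p.2 *: p.1 = 0.
  have := congr1 (fun t => t l') t12; rewrite /tensor /pureBH /= => t12'.
  by rewrite big_cat big_map /= t12' -big_split big1 // => p _ /=; rewrite scalerN subrr.
have := bilinear_tensor_eq0 s0 (kbilinear_smash_elt l).
rewrite big_cat big_map /= /smash_tensor => /eqP; rewrite addr_eq0 => /eqP ->.
rewrite -sumrN; apply: eq_bigr => p _.
by rewrite (klinearN ((kbilinear_smash_elt l).2 _)) opprK.
Qed.

Lemma smash_proj_lin a t1 e1 t2 e2 : smash_proj t1 e1 -> smash_proj t2 e2 ->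
  smash_proj (fun l => a *: t1 l + t2 l) (fun l => a *: e1 l + e2 l).
Proof.
move=> [s1 [-> ->]] [s2 [-> ->]].
exists (map (fun p => (a *: p.1, p.2)) s1 ++ s2); split;
  apply: functional_extensionality => l; rewrite /tensor /smash_tensor big_cat big_map scaler_sumr;
  congr (_ + _); apply: eq_bigr => p _ /=.
  by rewrite /pureBH !scalerA mulrC.
by rewrite (klinearZ ((kbilinear_smash_elt l).2 p.2)).
Qed.

Lemma smash_proj0 : smash_proj (fun _ => 0) (fun _ => 0).
Proof.
by exists [::]; split; apply: functional_extensionality => l; rewrite /tensor /smash_tensor big_nil.
Qed.

Lemma smash_proj_sum (I : Type) (Q : I -> Prop) (r : seq I) (T E : I -> TBH H B) :
  allProp Q r -> (forall i, Q i -> smash_proj (T i) (E i)) ->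
  smash_proj (fun l => \sum_(i <- r) T i l) (fun l => \sum_(i <- r) E i l).
Proof.
move=> + hTE; elim: r => [_|i r IH /= [Qi /IH Pr]].
  have nil0 (F : I -> TBH H B) : (fun l => \sum_(i <- [::]) F i l) = fun _ => 0.
    by apply: functional_extensionality => l; rewrite big_nil.
  by rewrite !nil0; exact: smash_proj0.
have cons1 (F : I -> TBH H B) :
    (fun l => \sum_(j <- i :: r) F j l) = fun l => 1 *: F i l + \sum_(j <- r) F j l.
  by apply: functional_extensionality => l; rewrite big_cons scale1r.
by rewrite !cons1; apply: smash_proj_lin => //; exact: hTE.
Qed.

Lemma smash_proj_pure b x : smash_proj (pureBH b x) (smash_elt cop pa b x).
Proof.
by exists [:: (b, x)]; split; apply: functional_extensionality => l;
  rewrite /tensor /smash_tensor big_seq1.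
Qed.

Lemma sw_smash_elt_unit b x l :
  sw cop x (fun a c => smash_elt cop pa (b * pa a 1) c l) = smash_elt cop pa b x l.
Proof.
rewrite /smash_elt /pureBH.
rewrite -(cop_coassoc hH (g := fun a a' c' => l c' *: (b * pa a 1 * pa a' 1))); last by ktrilin.
apply: eq_sw => m c'.
transitivity (sw cop m (fun a a' => l c' *: (b * (pa a 1 * pa a' 1)))).
  by apply: eq_sw => ? ?; rewrite mulrA.
rewrite (sw_klinear cop m (fun a a' => pa a 1 * pa a' 1) (f := fun z => l c' *: (b * z)));
  last by klin.
by rewrite -(pa_mul hpa) mulr1.
Qed.

Lemma smash_proj_smash_elt b x : smash_proj (smash_elt cop pa b x) (smash_elt cop pa b x).
Proof.
have {1}-> : smash_elt cop pa b x = fun l => \sum_(q <- cop x) pureBH (b * pa q.1 1) q.2 l by [].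
have {1}-> : smash_elt cop pa b x =
    fun l => \sum_(q <- cop x) smash_elt cop pa (b * pa q.1 1) q.2 l.
  by apply: functional_extensionality => l; rewrite -sw_smash_elt_unit.
by apply: (smash_proj_sum (Q := fun _ => True)) => [|q _];
  [exact: allPropT | exact: smash_proj_pure].
Qed.

Lemma pa_mul_pa1 h b y : sw cop h (fun a c => pa a b * pa (c * y) 1) = pa h (b * pa y 1).
Proof.
rewrite (pa_mul hpa).
transitivity (sw cop h (fun a u => sw cop u (fun p q => pa a b * pa p 1 * pa (q * y) 1)));
  last first.
  apply: eq_sw => a u; rewrite (pa_compl hpa).
  rewrite -(sw_klinear cop u (fun p q => pa p 1 * pa (q * y) 1) (f := fun t => pa a b * t));
    last by klin.
  by apply: eq_sw => p q; rewrite mulrA.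
rewrite -(cop_coassoc hH (g := fun a p q => pa a b * pa p 1 * pa (q * y) 1)); last by ktrilin.
apply: eq_sw => m q.
rewrite (sw_klinear cop m (fun a p => pa a b * pa p 1) (f := fun t => t * pa (q * y) 1));
  last by klin.
by rewrite -(pa_mul hpa) mulr1.
Qed.

Lemma pmodBH_smash_elt g b x l : pmodBH cop pa g (smash_elt cop pa b x) l =
  sw cop g (fun a c => smash_elt cop pa (pa a b) (c * x) l).
Proof.
symmetry; rewrite /smash_elt /pureBH /pmodBH.
transitivity (sw cop g (fun a c => sw cop c (fun u v => sw cop x (fun y z =>
    l (v * z) *: (pa a b * pa (u * y) 1))))).
  apply: eq_sw => a c.
  have bl : kbilinear (fun a' c' => l c' *: (pa a b * pa a' 1)) by kbilin.
  by rewrite (cop_mul hH bl c x).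
rewrite -(cop_coassoc hH (g := fun a u v => sw cop x (fun y z =>
    l (v * z) *: (pa a b * pa (u * y) 1)))); last by ktrilin.
apply: eq_sw => w v; rewrite -(sw_klinear _ _ _ (klinear_pa_r w)) /lmf /= sw_swap.
by apply: eq_sw => y z; rewrite swZ (klinearZ (klinear_pa_r w)) pa_mul_pa1.
Qed.

Lemma smash_proj_pmodBH g t e : smash_proj t e ->
  smash_proj (pmodBH cop pa g t) (pmodBH cop pa g e).
Proof.
move=> [s [-> ->]].
have -> : pmodBH cop pa g (tensor s) =
    fun l => \sum_(p <- s) sw cop g (fun a c => pureBH (pa a p.1) (c * p.2) l).
  apply: functional_extensionality => l; rewrite /pmodBH /tensor /pureBH -sw_sum.
  apply: eq_sw => a c; rewrite klinear_sum //; apply: eq_bigr => p _.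
  by rewrite klinearZ.
have -> : pmodBH cop pa g (smash_tensor s) =
    fun l => \sum_(p <- s) sw cop g (fun a c => smash_elt cop pa (pa a p.1) (c * p.2) l).
  apply: functional_extensionality => l; rewrite -(eq_bigr _ (fun p _ => pmodBH_smash_elt g _ _ l)).
  by rewrite /pmodBH /smash_tensor -sw_sum; apply: eq_sw => a c; rewrite klinear_sum.
apply: (smash_proj_sum (Q := fun _ => True)) => [|p _]; first exact: allPropT.
apply: (smash_proj_sum (Q := fun _ => True)) => [|q _]; first exact: allPropT.
exact: smash_proj_pure.
Qed.

Lemma dil_of_smash_pure b x :
  dil_of_smash (pureBbH (phiB pa b) x) = phiBH cop pa (pureBH b x).
Proof.
do 2!apply: functional_extensionality => ?.
rewrite /dil_of_smash /phiBH /pmodBH /pureBbH /pureBH /phiB.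
by apply: eq_sw => a c; rewrite klinearZ.
Qed.

Lemma smash_proj_compl T : compl T -> forall g, smash_proj (dil_of_smash T g) (fun _ => 0).
Proof.
elim=> [|b x|a T1 T2 _ IH1 _ IH2|h T' hT IH] g.
- rewrite (_ : dil_of_smash _ g = fun _ => 0); first exact: smash_proj0.
  by apply: functional_extensionality => l; rewrite /dil_of_smash sw0.
- pose e := phiBH cop pa (smash_elt cop pa b x) g.
  have -> : dil_of_smash (compl_gen b x) g =
      fun l => (-1) *: e l + phiBH cop pa (pureBH b x) g l.
    apply: functional_extensionality => l.
    rewrite -dil_of_smash_pure /e -dil_of_smash_glob_smash_elt.
    by rewrite /dil_of_smash /compl_gen scaleN1r addrC -swN -swD.
  rewrite (_ : (fun _ => 0) = fun l => (-1) *: e l + e l); last first.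
    by apply: functional_extensionality => l; rewrite scaleN1r addNr.
  apply: smash_proj_lin; apply: smash_proj_pmodBH;
    [exact: smash_proj_smash_elt | exact: smash_proj_pure].
- have -> : dil_of_smash (BbH_lin a T1 T2) g =
      fun l => a *: dil_of_smash T1 g l + dil_of_smash T2 g l.
    by apply: functional_extensionality => l; rewrite /dil_of_smash /BbH_lin swD swZ.
  rewrite (_ : (fun _ => 0) = fun _ => a *: 0 + 0); last first.
    by apply: functional_extensionality => l; rewrite scaler0 addr0.
  exact: smash_proj_lin.
- by rewrite dil_of_smash_act; [exact: IH | exact/regular_in_BbarH/in_BbarH_compl].
Qed.

Lemma smash_proj_in_dil F : in_dil cop pa F -> forall g, smash_proj (F g) (F g).
Proof.
case=> s [hs ->] g /=.
apply: (smash_proj_sum (T := fun p => dil_act p.1 (phiBH cop pa p.2) g)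
  (E := fun p => dil_act p.1 (phiBH cop pa p.2) g) hs) => p [s' ->].
rewrite /dil_act /phiBH; apply: smash_proj_pmodBH.
apply: (smash_proj_sum (Q := fun _ => True)) => [|q _]; first exact: allPropT.
exact: smash_proj_smash_elt.
Qed.

Lemma smash_of_dil_compl F : in_dil cop pa F -> compl (smash_of_dil F) ->
  smash_of_dil F = @BbH_zero _ H B.
Proof.
move=> hF hC; suff -> : F = dil_zero by exact: smash_of_dil0.
apply: functional_extensionality => g; apply: (smash_proj_fun (smash_proj_in_dil hF g)).
by have := smash_proj_compl hC g; rewrite smash_of_dilK //; exact: regular_in_dil.
Qed.

Lemma smash_of_dil_inj F1 F2 : in_dil cop pa F1 -> in_dil cop pa F2 ->
  smash_of_dil F1 = smash_of_dil F2 -> F1 = F2.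
Proof.
move=> /regular_in_dil h1 /regular_in_dil h2 e.
by rewrite -(smash_of_dilK h1) e smash_of_dilK.
Qed.

Lemma smash_of_dil_direct_summand : iso_to_direct_summand cop pa smash_of_dil compl.
Proof.
split; first by move=> a F1 F2 _ _; exact: smash_of_dil_lin.
split; first by move=> h F /regular_in_dil; exact: smash_of_dil_act.
split; first exact: smash_of_dil_inj.
split; first exact: in_BbarH_smash_of_dil.
split; first exact: in_BbarH_compl.
split; first exact: compl0.
split; first exact: compl_lin.
split; first exact: compl_act.
split; first exact: smash_of_dil_compl.
by move=> T /in_BbarH_dil_plus_compl [F [c [hF hc ->]]]; exists F, c.
Qed.
End SmashDilation.

Theorem mainTheorem17 (k : fieldType) (H B : algType k)
  (cop : H -> seq (H * H)) (cou : H -> k) (S : H -> H) (pa : H -> B -> B) :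
  is_hopf cop cou S ->
  sym_partial_action cop pa ->
  exists (Phi : (H -> TBH H B) -> TBbH H B) (C : TBbH H B -> Prop),
    iso_to_direct_summand cop pa Phi C.
Proof.
move=> hH hpa; have [Sinv SK SinvK] := antip_bij hH.
exists (smash_of_dil cop Sinv), (compl cop pa).
exact (smash_of_dil_direct_summand hH hpa SK SinvK).
Qed.
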